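(* Let $s$ be a positive integer and $P(z)=1+\sum_{n=1}^s a_nz^n$ with real coefficients $a_n$. Let $r>0$ and suppose $P^{(k)}(-r)\ge 0$ for all $k=0,1,\dots,s$. Then for every $1\le n\le s$, \[ 0\le a_n\le \frac{\binom{s}{n}}{r^n}. \] Moreover, if $a_n=\binom{s}{n}/r^n$ for at least one $n$ with $1\le n\le s$, then $P(z)=\left(1+\frac{z}{r}\right)^s$. *)

(* Real coefficients are modelled over an arbitrary
   realFieldType R (the statement is purely algebraic). *)
From HB Require Import structures.
From mathcomp Require Import all_boot all_order all_algebra.
Set Implicit Arguments. Unset Strict Implicit. Unset Printing Implicit Defensive.
Import Order.TTheory GRing.Theory Num.Theory.
Local Open Scope ring_scope.

Definition Ppoly (R : realFieldType) (s : nat) (a : nat -> R) : {poly R} :=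
  1 + \sum_(1 <= n < s.+1) a n *: 'X^n.

From HB Require Import structures.
From mathcomp Require Import all_boot all_order all_algebra zify.
Import Order.TTheory GRing.Theory Num.Theory.
Local Open Scope ring_scope.

(* Expand P = Ppoly s a in its Taylor series at -r and write
   z + r = r (1 + z/r):
       P = \sum_(i <= s) w_i (1 + z/r)^i,   w_i = P^(i)(-r) r^i / i!.
   The hypothesis makes every weight w_i nonnegative, and comparing constant
   coefficients gives \sum_i w_i = 1.  Comparing the coefficients of z^n gives
       a_n = \sum_i w_i * C(i, n) / r^n,
   a convex combination of the numbers C(i, n) / r^n, each at most
   C(s, n) / r^n and strictly smaller when i < s (and n >= 1).  Hence
   0 <= a_n <= C(s, n) / r^n, and equality forces all the weight onto i = s,
   i.e. P = (1 + z/r)^s. *)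

Lemma taylor_expansion {R : comNzRingType} (p : {poly R}) {n : nat} (x : R) :
  (size p <= n)%N -> p = \sum_(i < n) (p^`N(i)).[x] *: ('X - x%:P) ^+ i.
Proof.
move=> size_p.
have evalX (q : {poly R}) : (q^:P).['X] = q.
  rewrite horner_coef size_map_polyC -[RHS]coefK poly_def.
  by apply: eq_bigr => i _; rewrite coef_map /= mul_polyC.
have := @nderiv_taylor_wide _ n (p^:P) x%:P ('X - x%:P) (mulrC _ _).
rewrite size_map_polyC addrC subrK evalX => /(_ size_p) {1}->.
by apply: eq_bigr => i _; rewrite nderivn_map horner_map /= mul_polyC.
Qed.

Lemma taylor_expansion_scaled {R : fieldType} {p : {poly R}} {n : nat} {r : R} :
  r != 0 -> (size p <= n)%N ->
  p = \sum_(i < n) ((p^`N(i)).[- r] * r ^+ i) *: (1 + r^-1 *: 'X) ^+ i.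
Proof.
move=> r_neq0 size_p.
have shift : 'X - (- r)%:P = r *: (1 + r^-1 *: 'X).
  by rewrite polyCN opprK scalerDr scalerA mulfV // scale1r addrC alg_polyC.
rewrite {1}(taylor_expansion p (- r) size_p); apply: eq_bigr => i _.
by rewrite shift exprZn scalerA.
Qed.

Lemma coef_1_plus_scaleX (R : comNzRingType) (t : R) (m n : nat) :
  ((1 + t *: 'X) ^+ m)`_n = t ^+ n *+ 'C(m, n).
Proof.
rewrite addrC exprD1n coef_sum.
rewrite (eq_bigr (fun i : 'I_m.+1 => if (i : nat) == n then t ^+ n *+ 'C(m, n)
                                     else 0)); last first.
  move=> i _; rewrite coefMn exprZn coefZ coefXn eq_sym.
  by case: eqP => [->|_]; rewrite ?mulr1 ?mulr0 ?mul0rn.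
rewrite -big_mkcond /= -(big_mkord (fun i => i == n) (fun _ => t ^+ n *+ 'C(m, n))).
rewrite big_nat1_eq /= ltnS; case: leqP => // lt_m_n.
by rewrite bin_small // mulr0n.
Qed.

Lemma coef_taylor_scaled {R : fieldType} {p : {poly R}} {n : nat} (k : nat) {r : R} :
  r != 0 -> (size p <= n)%N ->
  p`_k = \sum_(i < n) ((p^`N(i)).[- r] * r ^+ i) * ('C(i, k)%:R / r ^+ k).
Proof.
move=> r_neq0 size_p; rewrite {1}(taylor_expansion_scaled r_neq0 size_p).
rewrite coef_sum; apply: eq_bigr => i _.
by rewrite coefZ coef_1_plus_scaleX exprVn -mulr_natl [_%:R * _]mulrC.
Qed.

Lemma convex_comb_le {R : numDomainType} {I : finType} {w f : I -> R} {M : R} :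
  (forall i, 0 <= w i) -> \sum_i w i = 1 -> (forall i, f i <= M) ->
  \sum_i w i * f i <= M.
Proof.
move=> w_ge0 w_sum f_le; rewrite -[M]mul1r -w_sum big_distrl /=.
by apply: ler_sum => i _; rewrite ler_wpM2l.
Qed.

Lemma convex_comb_eq {R : numDomainType} {I : finType} {w f : I -> R} {M : R} :
  (forall i, 0 <= w i) -> \sum_i w i = 1 -> (forall i, f i <= M) ->
  \sum_i w i * f i = M -> forall i, f i < M -> w i = 0.
Proof.
move=> w_ge0 w_sum f_le comb_eq i f_lt.
have gap_ge0 j : xpredT j -> 0 <= w j * (M - f j).
  by move=> _; rewrite mulr_ge0 // subr_ge0.
have gap_sum : \sum_j w j * (M - f j) = 0.
  rewrite (eq_bigr (fun j => w j * M - w j * f j)); last by move=> j _; rewrite mulrBr.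
  by rewrite sumrB -big_distrl /= w_sum mul1r comb_eq subrr.
move/eqP: (psumr_eq0P gap_ge0 gap_sum (i := i) isT); rewrite mulf_eq0 subr_eq0.
by rewrite (gt_eqF f_lt) orbF => /eqP.
Qed.

(* Strict monotonicity of C(_, n) for n >= 1: by Pascal's rule
   C(s, n) = C(s-1, n) + C(s-1, n-1), where C(s-1, n) >= C(i, n) and the
   last term is positive as n <= s. *)
Lemma ltn_bin2l (i s n : nat) : (i < s)%N -> (0 < n)%N -> (n <= s)%N ->
  ('C(i, n) < 'C(s, n))%N.
Proof.
case: s => [|s] // lt_i_s; case: n => [|n] // _ le_n_s.
rewrite binS; have := @leq_bin2l i s n.+1; have := bin_gt0 s n; lia.
Qed.

Lemma ler_scaled_bin {R : realFieldType} {r : R} {i s : nat} (n : nat) :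
  0 < r -> (i <= s)%N -> 'C(i, n)%:R / r ^+ n <= 'C(s, n)%:R / r ^+ n.
Proof.
by move=> r_gt0 le_i_s; rewrite ler_pM2r ?invr_gt0 ?exprn_gt0 // ler_nat leq_bin2l.
Qed.

Lemma ltr_scaled_bin {R : realFieldType} {r : R} {i s n : nat} :
  0 < r -> (i < s)%N -> (1 <= n <= s)%N ->
  'C(i, n)%:R / r ^+ n < 'C(s, n)%:R / r ^+ n.
Proof.
move=> r_gt0 lt_i_s /andP[n_gt0 le_n_s].
by rewrite ltr_pM2r ?invr_gt0 ?exprn_gt0 // ltr_nat ltn_bin2l.
Qed.

Lemma taylor_weight_ge0 {R : numDomainType} {p : {poly R}} {x r : R} {k : nat} :
  0 < r -> 0 <= (p^`(k)).[x] -> 0 <= (p^`N(k)).[x] * r ^+ k.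
Proof.
move=> r_gt0; rewrite nderivn_def hornerMn pmulrn_lge0 ?fact_gt0 // => coef_ge0.
by rewrite mulr_ge0 // exprn_ge0 // ltW.
Qed.

Lemma sum_weights_top {R : nzRingType} {V : lmodType R} {n : nat}
    {w : 'I_n.+1 -> R} (v : 'I_n.+1 -> V) :
  \sum_i w i = 1 -> (forall i : 'I_n, w (widen_ord (leqnSn n) i) = 0) ->
  \sum_i w i *: v i = v ord_max.
Proof.
move=> w_sum w_low.
have w_top : w ord_max = 1.
  by rewrite -w_sum big_ord_recr big1 /= ?add0r // => i _; apply: w_low.
rewrite big_ord_recr big1 /= ?add0r ?w_top ?scale1r // => i _.
by rewrite w_low scale0r.
Qed.

Lemma coef_Ppoly {R : realFieldType} (s : nat) (a : nat -> R) (k : nat) :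
  (Ppoly s a)`_k = if k == 0%N then 1 else if (k < s.+1)%N then a k else 0.
Proof.
rewrite /Ppoly coefD coef1 coef_sum.
rewrite (eq_bigr (fun j => if j == k then a j else 0)); last first.
  by move=> j _; rewrite coefZ coefXn eq_sym; case: eqP; rewrite ?mulr1 ?mulr0.
rewrite -big_mkcond big_nat1_eq /=.
by case: k => [|k] /=; rewrite ?addr0 ?add0r.
Qed.

Lemma size_Ppoly {R : realFieldType} (s : nat) (a : nat -> R) :
  (size (Ppoly s a) <= s.+1)%N.
Proof.
apply/leq_sizeP => j le_s_j; rewrite coef_Ppoly.
by case: j le_s_j => // j le_s_j; rewrite ltnNge le_s_j.
Qed.

Theorem mainTheorem5 (R : realFieldType) (s : nat) (a : nat -> R) (r : R) :
  (0 < s)%N -> 0 < r ->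
  (forall k : nat, (k <= s)%N -> 0 <= ((Ppoly s a)^`(k)).[- r]) ->
  (forall n : nat, (1 <= n <= s)%N ->
      0 <= a n /\ a n <= ('C(s, n))%:R / r ^+ n) /\
  ((exists n : nat, (1 <= n <= s)%N /\ a n = ('C(s, n))%:R / r ^+ n) ->
      Ppoly s a = (1 + r^-1 *: 'X) ^+ s).
Proof.
move=> _ r_gt0 deriv_ge0; have r_neq0 : r != 0 by rewrite gt_eqF.
pose w (i : 'I_s.+1) := ((Ppoly s a)^`N(i)).[- r] * r ^+ i.
pose f n (i : 'I_s.+1) : R := 'C(i, n)%:R / r ^+ n.
have w_ge0 i : 0 <= w i := taylor_weight_ge0 r_gt0 (deriv_ge0 i (ltn_ord i)).
have coefP k : (Ppoly s a)`_k = \sum_i w i * f k i.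
  by rewrite (coef_taylor_scaled k r_neq0 (size_Ppoly s a)).
have w_sum : \sum_i w i = 1.
  have := coefP 0%N; rewrite coef_Ppoly /= => ->.
  by apply: eq_bigr => i _; rewrite /f bin0 expr0 divr1 mulr1.
have a_comb n : (1 <= n <= s)%N -> a n = \sum_i w i * f n i.
  by case/andP=> n_gt0 le_n_s; rewrite -coefP coef_Ppoly (gtn_eqF n_gt0) ltnS le_n_s.
have f_le n i : f n i <= 'C(s, n)%:R / r ^+ n.
  by apply: ler_scaled_bin r_gt0 _; rewrite -ltnS.
split=> [n n_range|[n [n_range a_eq]]].
  rewrite a_comb //; split; last exact: convex_comb_le.
  by apply: sumr_ge0 => i _; rewrite /f mulr_ge0 // divr_ge0 // exprn_ge0 // ltW.
have w_low (i : 'I_s) : w (widen_ord (leqnSn s) i) = 0.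
  apply: (convex_comb_eq w_ge0 w_sum (f_le n)); first by rewrite -a_comb.
  exact: ltr_scaled_bin r_gt0 (ltn_ord i) n_range.
rewrite {1}(taylor_expansion_scaled r_neq0 (size_Ppoly s a)).
exact: (sum_weights_top (fun i : 'I_s.+1 => (1 + r^-1 *: 'X) ^+ i) w_sum w_low).
Qed.
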